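(* Let $k$ be a field of characteristic $0$, $B$ a $k$-algebra, $A$ a $B$-algebra equipped with a $B$-linear double bracket $\{\!\{-,-\}\!\}$, and let $e\in B$ be an idempotent with $BeB=B$. Write $1=\sum_ip_ieq_i$ with $p_i,q_i\in B$ and define $\operatorname{Tr}:A\to eAe$, $\operatorname{Tr}(a)=\sum_ieq_iap_ie$. Then for all $a,b\in A$, \[\operatorname{Tr}\{a,b\}=\{\operatorname{Tr}(a),\operatorname{Tr}(b)\},\] where $\{x,y\}=\{\!\{x,y\}\!\}'\{\!\{x,y\}\!\}''$ is the associated bracket.
   Context: A $B$-algebra is a $k$-algebra $A$ with a $k$-algebra map $B\to A$. Unadorned tensor products are over $k$; $x\in A\otimes A$ is written $x'\otimes x''$ (summation suppressed), $x^\circ=x''\otimes x'$. A double bracket on $A$ is a bilinear map $\{\!\{-,-\}\!\}:A\times A\to A\otimes A$ with $\{\!\{a,bc\}\!\}=b\{\!\{a,c\}\!\}+\{\!\{a,b\}\!\}c$ (outer bimodule structure $b(x\otimes y)c=bx\otimes yc$) and $\{\!\{a,b\}\!\}=-\{\!\{b,a\}\!\}^\circ$; it is $B$-linear if it vanishes whenever its second argument lies in the image of $B$. *)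

From HB Require Import structures.
From mathcomp Require Import all_boot all_order all_algebra.
Set Implicit Arguments. Unset Strict Implicit. Unset Printing Implicit Defensive.
Import GRing.Theory.
Local Open Scope ring_scope.

Definition bilinear_map (k : fieldType) (U V : lmodType k) (f : U -> U -> V) :=
  (forall x, linear (f x)) /\ (forall y, linear (fun x => f x y)).

(* A tensor product U (x)_k U over the field k, given by its universal
   property: a k-vector space carrier with a bilinear map tens, such that every
   bilinear map out of U x U factors uniquely through a linear map (tp_lift). *)
Record tensor_square (k : fieldType) (U : lmodType k) := TensorSquare {
  tp_carrier :> lmodType k;
  tp_tens : U -> U -> tp_carrier;
  tp_tens_bilinear : bilinear_map tp_tens;
  tp_lift : forall V : lmodType k, (U -> U -> V) -> tp_carrier -> V;
  tp_lift_linear : forall (V : lmodType k) (f : U -> U -> V),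
      bilinear_map f -> linear (tp_lift f);
  tp_lift_tens : forall (V : lmodType k) (f : U -> U -> V),
      bilinear_map f -> forall x y, tp_lift f (tp_tens x y) = f x y;
  tp_lift_unique : forall (V : lmodType k) (f : U -> U -> V) (g : tp_carrier -> V),
      bilinear_map f -> linear g -> (forall x y, g (tp_tens x y) = f x y) ->
      forall t, g t = tp_lift f t
}.

Section TensorOps.
Variables (k : fieldType) (A : algType k) (T : tensor_square A).

Definition tmul (t : T) : A := tp_lift (fun x y : A => x * y) t.
Definition tflip (t : T) : T := tp_lift (fun x y : A => tp_tens T y x) t.
Definition touter (b : A) (t : T) (c : A) : T :=
  tp_lift (fun x y : A => tp_tens T (b * x) (y * c)) t.

Definition double_bracket (dbr : A -> A -> T) :=
  [/\ bilinear_map dbr,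
      (forall a b c, dbr a (b * c) = touter b (dbr a c) 1 + touter 1 (dbr a b) c) &
      (forall a b, dbr a b = - tflip (dbr b a))].

Definition B_linear_dbr (B : algType k) (f : B -> A) (dbr : A -> A -> T) :=
  forall a (b : B), dbr a (f b) = 0.

Definition assoc_bracket (dbr : A -> A -> T) (x y : A) : A := tmul (dbr x y).

End TensorOps.

Definition Tr (k : fieldType) (B A : algType k) (f : B -> A) (e : B)
  (n : nat) (p q : 'I_n -> B) (a : A) : A :=
  \sum_(i < n) f (e * q i) * a * f (p i * e).

(* B-linearity and the Leibniz rule make {{x, -}} B-linear for the outer
   bimodule structure of A (x) A, and skew-symmetry turns this into
   B-linearity of {{-, y}} for the inner one.  With u_i = e q_i and
   v_i = p_i e this gives
     {{u_i a v_i, u_j b v_j}} = u_j {{a,b}}' v_i (x) u_i {{a,b}}'' v_j,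
   and after multiplying out, summing over i collapses the middle factors to
   sum_i v_i u_i = sum_i p_i e q_i = 1, as e is idempotent. *)

From HB Require Import structures.
From mathcomp Require Import all_boot all_order all_algebra.
Import GRing.Theory.
Local Open Scope ring_scope.
Set Implicit Arguments. Unset Strict Implicit. Unset Printing Implicit Defensive.

Lemma linear_sum_for (k : fieldType) (U V : lmodType k) (g : U -> V) :
  linear g -> forall I r (P : pred I) (F : I -> U),
  g (\sum_(i <- r | P i) F i) = \sum_(i <- r | P i) g (F i).
Proof.
move=> linear_g.
exact: (linear_sum (HB.pack g (GRing.isLinear.Build _ _ _ _ g linear_g))).
Qed.

Section TensorSquare.
Variables (k : fieldType) (A : algType k) (T : tensor_square A).

Local Notation "x \ox y" := (tp_tens T x y) (at level 40).
Local Notation tflip := (@tflip k A T).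
Local Notation tmul := (@tmul k A T).

Lemma linear_mull_mulr (u v : A) : linear (fun x : A => u * x * v).
Proof. by move=> a x y; rewrite mulrDr mulrDl -scalerAr -scalerAl. Qed.

Lemma bilinear_tens_linear (l1 l2 : A -> A) : linear l1 -> linear l2 ->
  bilinear_map (fun x y => l1 x \ox l2 y).
Proof.
case: (tp_tens_bilinear T) => tens_linr tens_linl linear_l1 linear_l2.
split=> [x | y] a s t /=.
- by rewrite linear_l2 tens_linr.
- by rewrite linear_l1 tens_linl.
Qed.

Lemma bilinear_tens_mul (u v w z : A) :
  bilinear_map (fun x y : A => (u * x * v) \ox (w * y * z)).
Proof. exact: bilinear_tens_linear (linear_mull_mulr u v) (linear_mull_mulr w z). Qed.

Lemma tensor_ext (V : lmodType k) (g h : T -> V) : linear g -> linear h ->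
  (forall x y, g (x \ox y) = h (x \ox y)) -> g =1 h.
Proof.
move=> linear_g linear_h eq_gh t.
have bilinear_g : bilinear_map (fun x y => g (x \ox y)).
  case: (tp_tens_bilinear T) => tens_linr tens_linl.
  by split=> [x | y] a s u /=; rewrite ?tens_linr ?tens_linl linear_g.
by rewrite (tp_lift_unique bilinear_g linear_g) // (tp_lift_unique bilinear_g linear_h).
Qed.

Definition tbimul (u v w z : A) (t : T) : T :=
  tp_lift (fun x y : A => (u * x * v) \ox (w * y * z)) t.

Lemma tbimul_is_linear u v w z : linear (tbimul u v w z).
Proof. exact/tp_lift_linear/bilinear_tens_mul. Qed.

HB.instance Definition _ u v w z :=
  GRing.isLinear.Build k T T *:%R (tbimul u v w z) (tbimul_is_linear u v w z).

Lemma tbimul_tens u v w z x y : tbimul u v w z (x \ox y) = (u * x * v) \ox (w * y * z).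
Proof. exact/tp_lift_tens/bilinear_tens_mul. Qed.

Lemma bilinear_flip : bilinear_map (fun x y : A => y \ox x).
Proof. by case: (tp_tens_bilinear T). Qed.

Lemma tflip_is_linear : linear tflip.
Proof. exact/tp_lift_linear/bilinear_flip. Qed.

HB.instance Definition _ := GRing.isLinear.Build k T T *:%R tflip tflip_is_linear.

Lemma tflip_tens x y : tflip (x \ox y) = y \ox x.
Proof. exact/tp_lift_tens/bilinear_flip. Qed.

Lemma bilinear_mul : bilinear_map (fun x y : A => x * y).
Proof.
split=> [x | y] a s t /=.
- by rewrite mulrDr scalerAr.
- by rewrite mulrDl scalerAl.
Qed.

Lemma tmul_is_linear : linear tmul.
Proof. exact/tp_lift_linear/bilinear_mul. Qed.

HB.instance Definition _ := GRing.isLinear.Build k T A *:%R tmul tmul_is_linear.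

Lemma tmul_tens x y : tmul (x \ox y) = x * y.
Proof. exact/tp_lift_tens/bilinear_mul. Qed.

Lemma touterE b t c : touter b t c = tbimul b 1 1 c t.
Proof.
have linear_mull : linear (fun x : A => b * x) by move=> a x y; rewrite mulrDr scalerAr.
have linear_mulr : linear (fun x : A => x * c) by move=> a x y; rewrite mulrDl scalerAl.
symmetry; apply: (tp_lift_unique (bilinear_tens_linear linear_mull linear_mulr)).
  exact: tbimul_is_linear.
by move=> x y; rewrite tbimul_tens mulr1 mul1r.
Qed.

Lemma tflip_tbimul u v w z t : tflip (tbimul u v w z t) = tbimul w z u v (tflip t).
Proof.
apply: (tensor_ext (g := tflip \o tbimul u v w z) (h := tbimul w z u v \o tflip)).
- by move=> a s r /=; rewrite !linearP.
- by move=> a s r /=; rewrite !linearP.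
by move=> x y /=; rewrite tbimul_tens !tflip_tens tbimul_tens.
Qed.

Lemma tbimul_comp u v w z u' v' w' z' t :
  tbimul u v w z (tbimul u' v' w' z' t) = tbimul (u * u') (v' * v) (w * w') (z' * z) t.
Proof.
apply: (tensor_ext (g := tbimul u v w z \o tbimul u' v' w' z')).
- by move=> a s r /=; rewrite !linearP.
- exact: tbimul_is_linear.
by move=> x y /=; rewrite !tbimul_tens !mulrA.
Qed.

Lemma tmul_tbimul_partition n (u z : A) (v w : 'I_n -> A) t :
  \sum_(i < n) v i * w i = 1 ->
  \sum_(i < n) tmul (tbimul u (v i) (w i) z t) = u * tmul t * z.
Proof.
move=> partition_vw.
apply: (tensor_ext (g := fun t => \sum_(i < n) tmul (tbimul u (v i) (w i) z t))
  (h := fun t => u * tmul t * z)).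
- move=> a s r; rewrite scaler_sumr -big_split /=.
  by apply: eq_bigr => i _; rewrite !linearP.
- by move=> a s r /=; rewrite linearP linear_mull_mulr.
move=> x y /=; under eq_bigr do rewrite tbimul_tens tmul_tens.
rewrite tmul_tens -[in RHS](mulr1 x) -partition_vw.
rewrite big_distrr big_distrl big_distrr big_distrl /=.
by apply: eq_bigr => i _; rewrite !mulrA.
Qed.

End TensorSquare.

Section DoubleBracket.
Variables (k : fieldType) (B A : algType k) (f : B -> A).
Variables (T : tensor_square A) (dbr : A -> A -> T).
Hypotheses (dbr_double : double_bracket dbr) (dbr_Blinear : B_linear_dbr f dbr).

Lemma dbr_sumr x I r (P : pred I) (F : I -> A) :
  dbr x (\sum_(i <- r | P i) F i) = \sum_(i <- r | P i) dbr x (F i).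
Proof. by case: dbr_double => [[linear_dbr _] _ _]; apply: linear_sum_for. Qed.

Lemma dbr_suml y I r (P : pred I) (F : I -> A) :
  dbr (\sum_(i <- r | P i) F i) y = \sum_(i <- r | P i) dbr (F i) y.
Proof.
by case: dbr_double => [[_ linear_dbr] _ _]; apply: (linear_sum_for (linear_dbr y)).
Qed.

Lemma dbr_fmulr x y c : dbr x (f c * y) = tbimul (f c) 1 1 1 (dbr x y).
Proof.
by case: dbr_double => _ leibniz _; rewrite leibniz dbr_Blinear !touterE linear0 addr0.
Qed.

Lemma dbr_mulfr x y c : dbr x (y * f c) = tbimul 1 1 1 (f c) (dbr x y).
Proof.
by case: dbr_double => _ leibniz _; rewrite leibniz dbr_Blinear !touterE linear0 add0r.
Qed.

Lemma dbr_fmull x y c : dbr (f c * x) y = tbimul 1 1 (f c) 1 (dbr x y).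
Proof.
case: dbr_double => _ _ skew.
by rewrite skew dbr_fmulr tflip_tbimul -linearN -skew.
Qed.

Lemma dbr_mulfl x y c : dbr (x * f c) y = tbimul 1 (f c) 1 1 (dbr x y).
Proof.
case: dbr_double => _ _ skew.
by rewrite skew dbr_mulfr tflip_tbimul -linearN -skew.
Qed.

Lemma dbr_sandwich x y c d c' d' :
  dbr (f c * x * f d) (f c' * y * f d') = tbimul (f c') (f d) (f c) (f d') (dbr x y).
Proof. by rewrite dbr_mulfr dbr_fmulr dbr_mulfl dbr_fmull !tbimul_comp !mulr1 !mul1r. Qed.

End DoubleBracket.

Theorem proposition2p5p7 (k : fieldType) (hchar : [pchar k] =i pred0)
  (B A : algType k) (f : {lrmorphism B -> A})
  (T : tensor_square A) (dbr : A -> A -> T)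
  (hdbr : double_bracket dbr) (hBlin : B_linear_dbr f dbr)
  (e : B) (he : e * e = e)
  (n : nat) (p q : 'I_n -> B) (hpq : \sum_(i < n) p i * e * q i = 1) :
  forall a b : A,
    Tr f e p q (assoc_bracket dbr a b)
    = assoc_bracket dbr (Tr f e p q a) (Tr f e p q b).
Proof.
move=> a b.
have partition : \sum_(i < n) f (p i * e) * f (e * q i) = 1.
  rewrite -(rmorph1 f) -hpq rmorph_sum; apply: eq_bigr => i _.
  by rewrite -rmorphM !mulrA -(mulrA (p i) e e) he.
rewrite /assoc_bracket /Tr (dbr_suml hdbr) linear_sum.
under [RHS]eq_bigr => i _ do rewrite (dbr_sumr hdbr) linear_sum.
rewrite exchange_big /=; apply: eq_bigr => j _.
under eq_bigr => i _ do rewrite (dbr_sandwich hdbr hBlin).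
by rewrite tmul_tbimul_partition.
Qed.
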